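(* Let $G=(V,E)$ be a simple undirected graph with $V=[n]$ and let $k\ge1$ be an integer. Let $Y\in\mathbb S^{nk}$, viewed as a $k\times k$ array of $n\times n$ blocks $Y^{rl}$ ($r,l\in[k]$), satisfy $Y^{rr}_{ij}=0$ for all $\{i,j\}\in E$, $r\in[k]$; $Y^{rl}_{ii}=0$ for all $i\in[n]$, $r,l\in[k]$, $r\ne l$; $Y\ge0$ entrywise; and $\begin{bmatrix}1&\mathrm{diag}(Y)^{\top}\\ \mathrm{diag}(Y)&Y\end{bmatrix}\succeq0$. Then $\sum_{r\in[k]}Y^{rr}_{ii}\le 1$ for every $i\in[n]$.
   Context: $\mathbb S^m$ denotes real symmetric $m\times m$ matrices; $\mathrm{diag}(Y)$ is the vector of diagonal entries; $\succeq0$ is positive semidefiniteness. *)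

From mathcomp Require Import all_boot all_order all_algebra.
Set Implicit Arguments. Unset Strict Implicit. Unset Printing Implicit Defensive.
Import Order.TTheory GRing.Theory Num.Theory.
Local Open Scope ring_scope.

Definition psd (R : realFieldType) (m : nat) (A : 'M[R]_m) : Prop :=
  A^T = A /\ forall x : 'cV[R]_m, 0 <= (x^T *m A *m x) 0 0.

(* Index of entry i of block r in an (k*n)-vector: r*n + i. *)
Definition bidx (k n : nat) (r : 'I_k) (i : 'I_n) : 'I_(k * n) := mxvec_index r i.

Definition diag_row (R : realFieldType) (m : nat) (Y : 'M[R]_m) : 'rV[R]_m :=
  \row_p Y p p.

Definition bordered (R : realFieldType) (m : nat) (Y : 'M[R]_m) : 'M[R]_(1 + m) :=
  block_mx (1%:M : 'M[R]_1) (diag_row Y) (diag_row Y)^T Y.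

(* The bordered matrix is PSD iff Y - diag(Y) diag(Y)^T is (Schur complement),
   so (diag(Y) . v)^2 <= v^T Y v for every v.  Take for v the indicator of the
   k positions (r, i), r in [k]: then diag(Y) . v = s := \sum_r Y^rr_ii, and
   v^T Y v = \sum_(r,l) Y^rl_ii = s because the diagonals of the off-diagonal
   blocks vanish.  Hence s^2 <= s, i.e. s <= 1. *)

From mathcomp Require Import all_boot all_order all_algebra.
From mathcomp Require Import lra.
Set Implicit Arguments. Unset Strict Implicit. Unset Printing Implicit Defensive.
Import Order.TTheory GRing.Theory Num.Theory.
Local Open Scope ring_scope.

Lemma mulmx_col_block_col (R : comPzRingType) m1 m2 (A : 'M[R]_m1)
    (B : 'M_(m1, m2)) (C : 'M_(m2, m1)) (D : 'M_m2) (x1 : 'cV_m1) (x2 : 'cV_m2) :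
  (col_mx x1 x2)^T *m block_mx A B C D *m col_mx x1 x2 =
  x1^T *m A *m x1 + x2^T *m C *m x1 + (x1^T *m B *m x2 + x2^T *m D *m x2).
Proof. by rewrite tr_col_mx mul_row_block !mul_row_col !mulmxDl. Qed.

Lemma psd_bordered_diag_sq (R : realFieldType) m (Y : 'M[R]_m) (v : 'cV_m) :
  psd (bordered Y) -> ((diag_row Y *m v) 0 0) ^+ 2 <= (v^T *m Y *m v) 0 0.
Proof.
move=> [_ Bpsd]; set t := (diag_row Y *m v) 0 0.
have := Bpsd (col_mx t%:M (- v)).
rewrite /bordered mulmx_col_block_col tr_scalar_mx linearN /=.
rewrite !(mulNmx, mulmxN, opprK, mulmx1, mul_scalar_mx, mul_mx_scalar).
have tE : \sum_j diag_row Y 0 j * v j 0 = t by rewrite /t mxE.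
rewrite -scalemxAl -trmx_mul !mxE eqxx tE /= mulr1 expr2; lra.
Qed.

Section SumDelta.
Variables (R : pzSemiRingType) (m : nat) (I : finType) (f : I -> 'I_m).

Definition sum_delta_col : 'cV[R]_m := \sum_r delta_mx (f r) 0.

Lemma tr_sum_delta_col_mulmx p (A : 'M[R]_(m, p)) :
  sum_delta_col^T *m A = \sum_r row (f r) A.
Proof.
rewrite linear_sum mulmx_suml; apply: eq_bigr => r _.
by rewrite rowE; congr (_ *m _); exact: trmx_delta.
Qed.

Lemma mulmx_sum_delta_col_entry (u : 'rV[R]_m) :
  (u *m sum_delta_col) 0 0 = \sum_r u 0 (f r).
Proof. by rewrite mulmx_sumr summxE; apply: eq_bigr => r _; rewrite -colE mxE. Qed.

Lemma quad_sum_delta_col (A : 'M[R]_m) :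
  (sum_delta_col^T *m A *m sum_delta_col) 0 0 = \sum_r \sum_l A (f l) (f r).
Proof.
rewrite mulmx_sum_delta_col_entry; apply: eq_bigr => r _.
by rewrite tr_sum_delta_col_mulmx summxE; apply: eq_bigr => l _; rewrite mxE.
Qed.

End SumDelta.

Lemma le1_of_sqr_le (R : realDomainType) (x : R) : x ^+ 2 <= x -> x <= 1.
Proof. by move=> ?; nra. Qed.

Theorem lemma1 (R : realFieldType) (n k : nat) (e : rel 'I_n)
  (e_sym : symmetric e) (e_irr : irreflexive e) (k_ge1 : (1 <= k)%N)
  (Y : 'M[R]_(k * n))
  (Ysym : Y^T = Y)
  (Yedge : forall (i j : 'I_n) (r : 'I_k), e i j -> Y (bidx r i) (bidx r j) = 0)
  (Ydiag : forall (i : 'I_n) (r l : 'I_k), r != l -> Y (bidx r i) (bidx l i) = 0)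
  (Ynneg : forall p q, 0 <= Y p q)
  (Ypsd : psd (bordered Y)) :
  forall i : 'I_n, \sum_(r < k) Y (bidx r i) (bidx r i) <= 1.
Proof.
move=> i; apply: le1_of_sqr_le.
have := psd_bordered_diag_sq (sum_delta_col R (fun r : 'I_k => bidx r i)) Ypsd.
rewrite mulmx_sum_delta_col_entry quad_sum_delta_col.
have block_diag_sum :
    \sum_(r < k) \sum_(l < k) Y (bidx l i) (bidx r i) =
    \sum_(r < k) Y (bidx r i) (bidx r i).
  apply: eq_bigr => r _.
  by rewrite (bigD1 r) //= big1 ?addr0 // => l; exact: Ydiag.
by under eq_bigr do rewrite mxE; rewrite block_diag_sum.
Qed.
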